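(* There is a universal constant $c$ such that for every sufficiently large integer $N$ there are $N$ points $x_1,\dots,x_N$ on $\mathbb{S}^2$ such that for every unit vector $v\in\mathbb{S}^2$, at most $c\frac{\ln N}{\ln\ln N}$ of the points $x_i$ lie in the strip $\{x\in\mathbb{S}^2:|\langle v,x\rangle|\le\frac1N\}$.
   Context: $\mathbb{S}^2=\{x\in\mathbb{R}^3:|x|=1\}$. *)

From Stdlib Require Import Reals List.
Import ListNotations.
Open Scope R_scope.

Definition R3 : Type := (R * R * R)%type.

Definition dot3 (u v : R3) : R :=
  let '(u1, u2, u3) := u in
  let '(v1, v2, v3) := v in
  u1 * v1 + u2 * v2 + u3 * v3.

Definition on_sphere (x : R3) : Prop := sqrt (dot3 x x) = 1.

Definition strip_count (N : nat) (x : nat -> R3) (v : R3) : nat :=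
  length (filter (fun i => if Rle_dec (Rabs (dot3 v (x i))) (/ INR N)
                           then true else false) (seq 0 N)).

From Stdlib Require Import Reals List Lia Lra Psatz ZArith Bool Arith FinFun.
Import ListNotations.

(* Take the points among the radial projections onto S^2 of the grid points [(N, a - N, b - N)],
   [0 <= a, b <= 2N]. For a unit vector [v], a point in the strip comes from a grid point
   where the affine form [l(a, b) = v1 N + v2 (a - N) + v3 (b - N)] is at most [2] in absolute
   value. Up to swapping [a] and [b] we have [|v2| <= |v3|], hence [|v3| >= 1/4]; then the
   chosen strip points with smallest and largest [a], say [P] and [Q], confine all the others
   to a thin parallelogram [slab P Q] which does not depend on [v] and contains at most
   [130 (2N + 1)] grid points. A random [N]-tuple of grid points has [K] points in a given
   slab with probability at most [65^K / K!], so a union bound over the [(2N + 1)^4] slabs (and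
   over coincidences) yields [N] distinct points meeting every slab, hence every strip, in fewer
   than [K ~ 195 ln N / ln ln N] points. *)

Local Open Scope nat_scope.

Definition count {A} (p : A -> bool) (l : list A) : nat := length (filter p l).

Section Counting.
Context {A : Type}.
Implicit Types (p q : A -> bool) (l m T : list A).

Lemma count_app p l1 l2 : count p (l1 ++ l2) = count p l1 + count p l2.
Proof. unfold count; rewrite filter_app, length_app; lia. Qed.

Lemma count_map {B} p (g : B -> A) (l : list B) :
  count p (map g l) = count (fun y => p (g y)) l.
Proof.
  unfold count; induction l as [|b l IH]; simpl; [reflexivity|].
  destruct (p (g b)); simpl; lia.
Qed.

Lemma count_ext p q l : (forall x, p x = q x) -> count p l = count q l.
Proof. intros H; unfold count; f_equal; apply filter_ext, H. Qed.

Lemma count_le_length p l : count p l <= length l.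
Proof. apply filter_length_le. Qed.

Lemma count_orb p q l : count (fun x => p x || q x) l <= count p l + count q l.
Proof.
  unfold count; induction l as [|a l IH]; simpl; [lia|].
  destruct (p a), (q a); simpl; lia.
Qed.

Lemma count_le_incl p q l :
  (forall x, In x l -> p x = true -> q x = true) -> count p l <= count q l.
Proof.
  unfold count; induction l as [|a l IH]; simpl; intros H; [lia|].
  destruct (p a) eqn:E; [rewrite (H a (or_introl eq_refl) E); simpl|destruct (q a); simpl];
    specialize (IH (fun x Hx => H x (or_intror Hx))); lia.
Qed.

Lemma count_le_of_NoDup p l m :
  NoDup l -> (forall x, In x l -> p x = true -> In x m) -> count p l <= length m.
Proof.
  intros Hl H; apply NoDup_incl_length; [now apply NoDup_filter|].
  intros x Hx; apply filter_In in Hx as [Hx Hp]; auto.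
Qed.

Lemma count_existsb_le {X} (B : X -> A -> bool) (L : list X) T d M :
  (forall P, In P L -> d * count (B P) T <= M) ->
  d * count (fun f => existsb (fun P => B P f) L) T <= length L * M.
Proof.
  induction L as [|P L IH]; simpl; intros H.
  - clear H; unfold count; induction T; simpl; lia.
  - pose proof (count_orb (B P) (fun f => existsb (fun P => B P f) L) T).
    specialize (IH (fun Q HQ => H Q (or_intror HQ))); specialize (H P (or_introl eq_refl)); nia.
Qed.

Lemma exists_count_lt_length p l : count p l < length l -> exists x, In x l /\ p x = false.
Proof.
  unfold count; induction l as [|x l IH]; simpl; [lia|].
  destruct (p x) eqn:E; simpl; intros H.
  - destruct IH as [y [Hy Hp]]; [lia|]; eauto.
  - eauto.
Qed.

End Counting.

Lemma add_pow_lower_bound N k : (k + 1) * N ^ k + N ^ (k + 1) <= (N + 1) ^ (k + 1).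
Proof.
  induction k as [|k IH]; [simpl; lia|].
  assert (N ^ (k + 1) <= (N + 1) ^ (k + 1)) by (apply Nat.pow_le_mono_l; lia).
  replace (S k + 1) with (S (k + 1)) by lia; rewrite !Nat.pow_succ_r'.
  replace (S k) with (k + 1) by lia; rewrite Nat.pow_add_r in *; simpl in *; nia.
Qed.

Fixpoint tuples {A} (G : list A) (N : nat) : list (list A) :=
  match N with
  | 0 => [[]]
  | S N' => flat_map (fun x => map (cons x) (tuples G N')) G
  end.

Section Tuples.
Context {A : Type}.
Implicit Types (G : list A) (P : A -> bool).

Lemma length_tuples G N : length (tuples G N) = length G ^ N.
Proof.
  induction N as [|N IH]; simpl; [reflexivity|].
  rewrite flat_map_constant_length with (c := length G ^ N); [lia|].
  intros x _; rewrite length_map; exact IH.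
Qed.

Lemma in_tuples G N f : In f (tuples G N) -> length f = N /\ incl f G.
Proof.
  revert f; induction N as [|N IH]; simpl; intros f Hf.
  - destruct Hf as [<-|[]]; split; [reflexivity|intros y []].
  - apply in_flat_map in Hf as [x [Hx Hf]]; apply in_map_iff in Hf as [f' [<- Hf']].
    apply IH in Hf' as [Hl Hi]; split; [simpl; lia|].
    intros y [<-|Hy]; auto.
Qed.

Lemma count_hits_flat_map_cons P k H (T : list (list A)) :
  count (fun f => S k <=? count P f) (flat_map (fun x => map (cons x) T) H)
  <= count P H * count (fun f => k <=? count P f) T
     + length H * count (fun f => S k <=? count P f) T.
Proof.
  assert (Hcons : forall x f, count P (x :: f) = (if P x then 1 else 0) + count P f)
    by (intros x f; unfold count; simpl; destruct (P x); reflexivity).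
  induction H as [|x H IH]; [unfold count; simpl; lia|].
  cbn [flat_map]; rewrite count_app, count_map, Hcons.
  rewrite (count_ext _ (fun f => if P x then k <=? count P f else S k <=? count P f))
    by (intros f; rewrite Hcons; destruct (P x); reflexivity).
  destruct (P x); cbn [length]; lia.
Qed.

Lemma count_tuples_hits G P N k :
  count (fun f => k <=? count P f) (tuples G N) * length G ^ k * fact k
  <= N ^ k * count P G ^ k * length G ^ N.
Proof.
  set (g := length G); set (s := count P G).
  set (hits := fun N k => count (fun f => k <=? count P f) (tuples G N)).
  change (hits N k * g ^ k * fact k <= N ^ k * s ^ k * g ^ N).
  revert k; induction N as [|N IH]; intros k.
  - destruct k; unfold hits, count; simpl; lia.
  - destruct k as [|k].
    + pose proof (count_le_length (fun f => 0 <=? count P f) (tuples G (S N))) as Hle.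
      rewrite length_tuples in Hle; fold g in Hle.
      unfold hits; rewrite !Nat.pow_0_r; cbn [fact]; lia.
    + assert (Hrec : hits (S N) (S k) <= s * hits N k + g * hits N (S k))
        by apply count_hits_flat_map_cons.
      pose proof (IH k) as H1; pose proof (IH (S k)) as H2.
      pose proof (add_pow_lower_bound N k) as Hb.
      replace (k + 1) with (S k) in Hb by lia; replace (N + 1) with (S N) in Hb by lia.
      change (fact (S k)) with (S k * fact k) in *; rewrite !Nat.pow_succ_r' in *.
      set (B1 := hits N k) in *; set (B2 := hits N (S k)) in *.
      set (c := s * s ^ k * (g * g ^ N)).
      transitivity ((s * B1 + g * B2) * (g * g ^ k) * (S k * fact k));
        [now apply Nat.mul_le_mono_r, Nat.mul_le_mono_r|].
      transitivity (s * g * S k * (N ^ k * s ^ k * g ^ N) + g * (N * N ^ k * (s * s ^ k) * g ^ N)).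
      { replace ((s * B1 + g * B2) * (g * g ^ k) * (S k * fact k))
          with (s * g * S k * (B1 * g ^ k * fact k) + g * (B2 * (g * g ^ k) * (S k * fact k)))
          by ring.
        apply Nat.add_le_mono; apply Nat.mul_le_mono_l; assumption. }
      replace (s * g * S k * (N ^ k * s ^ k * g ^ N) + g * (N * N ^ k * (s * s ^ k) * g ^ N))
        with (c * (S k * N ^ k + N * N ^ k)) by (unfold c; ring).
      replace (S N * S N ^ k * (s * s ^ k) * (g * g ^ N)) with (c * (S N * S N ^ k))
        by (unfold c; ring).
      now apply Nat.mul_le_mono_l.
Qed.

Lemma count_tuples_hits_scaled G P N k d :
  0 < length G -> d * N ^ k * count P G ^ k <= length G ^ k * fact k ->
  d * count (fun f => k <=? count P f) (tuples G N) <= length G ^ N.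
Proof.
  intros Hg Hd; pose proof (count_tuples_hits G P N k) as Hk.
  assert (Hpos : 0 < length G ^ k * fact k)
    by (apply Nat.mul_pos_pos; [apply Nat.neq_0_lt_0, Nat.pow_nonzero; lia|apply lt_O_fact]).
  apply (Nat.mul_le_mono_pos_r _ _ _ Hpos); nia.
Qed.
End Tuples.

Definition grid (n : nat) : list (nat * nat) := list_prod (seq 0 n) (seq 0 n).
Definition transpose (P : nat * nat) : nat * nat := (snd P, fst P).

Lemma NoDup_list_prod {A B} (l1 : list A) (l2 : list B) :
  NoDup l1 -> NoDup l2 -> NoDup (list_prod l1 l2).
Proof.
  intros H1 H2; induction H1 as [|a l1 Ha H1 IH]; simpl; [constructor|].
  apply NoDup_app; auto.
  - apply (FinFun.Injective_map_NoDup (f := pair a)); [intros x y E; now injection E|exact H2].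
  - intros [a' b] Hm Hp; apply in_map_iff in Hm as [b' [E _]]; injection E as <- _.
    apply in_prod_iff in Hp as [Hp _]; contradiction.
Qed.

Lemma NoDup_grid n : NoDup (grid n).
Proof. apply NoDup_list_prod; apply seq_NoDup. Qed.

Lemma in_grid n P : In P (grid n) <-> fst P < n /\ snd P < n.
Proof. destruct P as [a b]; unfold grid; rewrite in_prod_iff, !in_seq; simpl; lia. Qed.

Lemma length_grid n : length (grid n) = n ^ 2.
Proof. unfold grid; rewrite length_prod, length_seq; simpl; lia. Qed.

Lemma count_grid_transpose p n : count p (grid n) <= count (fun R => p (transpose R)) (grid n).
Proof.
  unfold count; rewrite <- (length_map transpose (filter (fun R => p (transpose R)) (grid n))).
  apply NoDup_incl_length; [apply NoDup_filter, NoDup_grid|].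
  intros [a b] H; apply filter_In in H as [H Hp]; apply in_map_iff.
  exists (b, a); split; [reflexivity|]; apply filter_In; split; [|exact Hp].
  apply in_grid in H; apply in_grid; simpl in *; lia.
Qed.

Lemma count_grid_columns p n (lo : nat -> Z) W :
  (forall a b, p (a, b) = true -> (lo a <= Z.of_nat b <= lo a + Z.of_nat W)%Z) ->
  count p (grid n) <= n * S W.
Proof.
  intros H.
  set (columns := flat_map (fun a => map (pair a) (seq (Z.to_nat (lo a)) (S W))) (seq 0 n)).
  replace (n * S W) with (length columns)
    by (unfold columns; rewrite flat_map_constant_length with (c := S W);
        [rewrite length_seq; lia|intros; now rewrite length_map, length_seq]).
  apply count_le_of_NoDup; [apply NoDup_grid|].
  intros [a b] HR Hp; apply in_grid in HR; simpl in HR; specialize (H a b Hp).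
  apply in_flat_map; exists a; split; [apply in_seq; lia|].
  apply in_map, in_seq; lia.
Qed.

Section Slabs.
Local Coercion Z.of_nat : nat >-> Z.

Definition slab_a (P Q R : nat * nat) : bool :=
  let '(aP, bP) := P in let '(aQ, bQ) := Q in let '(aR, bR) := R in
  (aP <=? aR) && (aR <=? aQ) &&
  (Z.abs ((aR - aP) * (bQ - bP) - (bR - bP) * (aQ - aP)) <=? 32 * (aQ - aP))%Z &&
  (if aQ =? aP then (Z.abs (bR - bP) <=? 16)%Z else true).

Definition slab_b (P Q R : nat * nat) : bool :=
  slab_a (transpose P) (transpose Q) (transpose R).

Definition slab (P Q R : nat * nat) : bool := slab_a P Q R || slab_b P Q R.

Definition same_point (P R : nat * nat) : bool := (fst P =? fst R) && (snd P =? snd R).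

Definition slab_low (P Q : nat * nat) (a : nat) : Z :=
  let '(aP, bP) := P in let '(aQ, bQ) := Q in
  let d := (aQ - aP)%Z in
  if aQ =? aP then (bP - 16)%Z else (((a - aP) * (bQ - bP) + bP * d - 32 * d) / d)%Z.

End Slabs.

Lemma slab_a_column P Q a b :
  slab_a P Q (a, b) = true -> (slab_low P Q a <= Z.of_nat b <= slab_low P Q a + 64)%Z.
Proof.
  destruct P as [aP bP], Q as [aQ bQ]; unfold slab_a, slab_low.
  rewrite !andb_true_iff, !Nat.leb_le, Z.leb_le.
  destruct (aQ =? aP) eqn:E; intros [[[H1 H2] H3] H4]; [apply Z.leb_le in H4; lia|].
  apply Nat.eqb_neq in E.
  set (d := (Z.of_nat aQ - Z.of_nat aP)%Z) in *.
  set (c := ((Z.of_nat a - Z.of_nat aP) * (Z.of_nat bQ - Z.of_nat bP) + Z.of_nat bP * d)%Z).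
  assert (Hd : (0 < d)%Z) by lia.
  assert (Hc : (Z.abs (c - Z.of_nat b * d) <= 32 * d)%Z).
  { unfold c; replace ((Z.of_nat a - Z.of_nat aP) * (Z.of_nat bQ - Z.of_nat bP)
                       + Z.of_nat bP * d - Z.of_nat b * d)%Z
      with ((Z.of_nat a - Z.of_nat aP) * (Z.of_nat bQ - Z.of_nat bP)
            - (Z.of_nat b - Z.of_nat bP) * d)%Z by ring; exact H3. }
  pose proof (Z.div_mod (c - 32 * d) d ltac:(lia)).
  pose proof (Z.mod_pos_bound (c - 32 * d) d Hd).
  clearbody c d; nia.
Qed.

Lemma count_slab P Q n : count (slab P Q) (grid n) <= 130 * n.
Proof.
  assert (Ha : forall P Q, count (slab_a P Q) (grid n) <= n * 65)
    by (intros P' Q'; apply (count_grid_columns _ _ (slab_low P' Q') 64), slab_a_column).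
  assert (Hb : count (slab_b P Q) (grid n) <= n * 65).
  { etransitivity; [apply count_grid_transpose|].
    rewrite (count_ext _ (slab_a (transpose P) (transpose Q))) by now intros [a b].
    apply Ha. }
  pose proof (count_orb (slab_a P Q) (slab_b P Q) (grid n)).
  specialize (Ha P Q); unfold slab; lia.
Qed.

Lemma count_same_point P n : count (same_point P) (grid n) <= 1.
Proof.
  change 1 with (length [P]); apply count_le_of_NoDup; [apply NoDup_grid|].
  intros R _ H; unfold same_point in H; rewrite andb_true_iff, !Nat.eqb_eq in H.
  left; destruct P, R; simpl in *; f_equal; lia.
Qed.

Lemma NoDup_of_count_same_point (f G : list (nat * nat)) :
  incl f G -> (forall P, In P G -> count (same_point P) f < 2) -> NoDup f.
Proof.
  assert (Hrefl : forall P, same_point P P = true)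
    by (intros P; unfold same_point; now rewrite !Nat.eqb_refl).
  induction f as [|x f IH]; intros HG H; constructor.
  - intros Hx; specialize (H x (HG x (or_introl eq_refl))); unfold count in H; simpl in H.
    rewrite Hrefl in H; simpl in H.
    assert (Hin : In x (filter (same_point x) f)) by (apply filter_In; auto).
    destruct (filter (same_point x) f); [destruct Hin|simpl in H; lia].
  - apply IH; [intros y Hy; apply HG; now right|].
    intros P HP; specialize (H P HP); unfold count in *; simpl in H.
    destruct (same_point P x); simpl in H; lia.
Qed.

Section RandomTuple.
Variables N K : nat.
Hypothesis HK : 2 * (2 * N + 1) ^ 4 * 65 ^ K <= fact K.
Let G := grid (2 * N + 1).

(* The expected number of points of a random [N]-tuple in [slab P Q] is at most
   [N * 130 (2N + 1) / |G| <= 65]. *)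
Lemma count_tuples_overloaded_slab P Q :
  2 * length G ^ 2 * count (fun f => K <=? count (slab P Q) f) (tuples G N) <= length G ^ N.
Proof.
  apply count_tuples_hits_scaled; [unfold G; rewrite length_grid; simpl; nia|].
  assert (Hs : N * count (slab P Q) G <= 65 * length G).
  { unfold G; rewrite length_grid.
    transitivity (N * (130 * (2 * N + 1))); [apply Nat.mul_le_mono_l, count_slab|simpl; nia]. }
  rewrite <- Nat.mul_assoc, <- Nat.pow_mul_l.
  transitivity (2 * length G ^ 2 * (65 * length G) ^ K);
    [apply Nat.mul_le_mono_l, Nat.pow_le_mono_l, Hs|].
  rewrite Nat.pow_mul_l, Nat.mul_assoc, (Nat.mul_comm _ (length G ^ K)).
  apply Nat.mul_le_mono_l; unfold G; rewrite length_grid, <- Nat.pow_mul_r; exact HK.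
Qed.

Lemma count_tuples_repeated_point P :
  8 * length G * count (fun f => 2 <=? count (same_point P) f) (tuples G N) <= length G ^ N.
Proof.
  apply count_tuples_hits_scaled; [unfold G; rewrite length_grid; simpl; nia|].
  assert (Hc : count (same_point P) G ^ 2 <= 1)
    by (pose proof (count_same_point P (2 * N + 1)) as H1; fold G in H1; rewrite Nat.pow_2_r; nia).
  transitivity (8 * length G * N ^ 2 * 1); [apply Nat.mul_le_mono_l, Hc|].
  unfold G; rewrite length_grid; simpl; nia.
Qed.

Lemma exists_good_tuple :
  exists f, In f (tuples G N) /\
    (forall P Q, In P G -> In Q G -> count (slab P Q) f < K) /\
    (forall P, In P G -> count (same_point P) f < 2).
Proof.
  set (bad_slab := fun f => existsb (fun PQ => K <=? count (slab (fst PQ) (snd PQ)) f)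
                                    (list_prod G G)).
  set (bad_repeat := fun f => existsb (fun P => 2 <=? count (same_point P) f) G).
  assert (Hg : 0 < length G) by (unfold G; rewrite length_grid; simpl; nia).
  assert (Hslab : 2 * count bad_slab (tuples G N) <= length G ^ N).
  { apply (Nat.mul_le_mono_pos_l _ _ (length G ^ 2));
      [apply Nat.neq_0_lt_0, Nat.pow_nonzero; lia|].
    rewrite Nat.mul_assoc, (Nat.mul_comm _ 2).
    replace (length G ^ 2 * length G ^ N) with (length (list_prod G G) * length G ^ N)
      by (rewrite length_prod, Nat.pow_2_r; reflexivity).
    apply count_existsb_le; intros [P Q] _; apply count_tuples_overloaded_slab. }
  assert (Hrepeat : 8 * count bad_repeat (tuples G N) <= length G ^ N).
  { apply (Nat.mul_le_mono_pos_l _ _ (length G) Hg); rewrite Nat.mul_assoc, (Nat.mul_comm _ 8).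
    apply count_existsb_le; intros P _; apply count_tuples_repeated_point. }
  destruct (exists_count_lt_length (fun f => bad_slab f || bad_repeat f) (tuples G N))
    as [f [Hf Hgood]].
  { pose proof (count_orb bad_slab bad_repeat (tuples G N)).
    assert (0 < length G ^ N) by (apply Nat.neq_0_lt_0, Nat.pow_nonzero; lia).
    rewrite length_tuples; lia. }
  apply orb_false_iff in Hgood as [Hs Hr].
  exists f; repeat split; [exact Hf| |].
  - intros P Q HP HQ; apply Nat.leb_gt.
    destruct (K <=? count (slab P Q) f) eqn:E; [|reflexivity].
    rewrite <- Hs; symmetry; apply existsb_exists.
    exists (P, Q); split; [now apply in_prod|exact E].
  - intros P HP; apply Nat.leb_gt.
    destruct (2 <=? count (same_point P) f) eqn:E; [|reflexivity].
    rewrite <- Hr; symmetry; apply existsb_exists; eauto.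
Qed.
End RandomTuple.

Local Open Scope R_scope.

Definition affine_form (N : nat) (w1 w2 w3 : R) (a b : nat) : R :=
  w1 * INR N + w2 * (INR a - INR N) + w3 * (INR b - INR N).

Lemma affine_form_transpose N w1 w2 w3 a b :
  affine_form N w1 w2 w3 a b = affine_form N w1 w3 w2 b a.
Proof. unfold affine_form; ring. Qed.

(* With [|w2| <= |w3|], a small [|w3|] would force [|w1| > 3/4], and then the term [w1 N]
   dominates the affine form on the whole grid. *)
Lemma steep_of_small_affine_form N w1 w2 w3 a b :
  (9 <= N)%nat -> w1 * w1 + w2 * w2 + w3 * w3 = 1 -> Rabs w2 <= Rabs w3 ->
  (a <= 2 * N)%nat -> (b <= 2 * N)%nat -> Rabs (affine_form N w1 w2 w3 a b) <= 2 ->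
  1 / 4 <= Rabs w3.
Proof.
  intros HN Hs H23 Ha Hb Hl.
  apply le_INR in HN, Ha, Hb; rewrite mult_INR in Ha, Hb; simpl in HN, Ha, Hb.
  destruct (Rle_lt_dec (1 / 4) (Rabs w3)) as [h|h]; [exact h|exfalso].
  unfold affine_form in Hl.
  set (n := INR N) in *; set (x := INR a - n) in *; set (y := INR b - n) in *.
  assert (Hx : Rabs x <= n) by (pose proof (pos_INR a); apply Rabs_le; unfold x; lra).
  assert (Hy : Rabs y <= n) by (pose proof (pos_INR b); apply Rabs_le; unfold y; lra).
  pose proof (Rsqr_abs w1); pose proof (Rsqr_abs w2); pose proof (Rsqr_abs w3); unfold Rsqr in *.
  pose proof (Rabs_pos w1); pose proof (Rabs_pos w2); pose proof (Rabs_pos w3).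
  assert (Hw1 : 3 / 4 < Rabs w1) by nra.
  assert (Rabs (w2 * x) <= n / 4) by (rewrite Rabs_mult; pose proof (Rabs_pos x); nra).
  assert (Rabs (w3 * y) <= n / 4) by (rewrite Rabs_mult; pose proof (Rabs_pos y); nra).
  assert (Rabs (w1 * n) > 3 / 4 * n) by (rewrite Rabs_mult, (Rabs_right n) by lra; nra).
  pose proof (Rabs_triang (w2 * x) (w3 * y)).
  pose proof (Rabs_triang (w1 * n + w2 * x + w3 * y) (- (w2 * x + w3 * y))) as Ht.
  rewrite Rabs_Ropp in Ht.
  replace (w1 * n + w2 * x + w3 * y + - (w2 * x + w3 * y)) with (w1 * n) in Ht by ring.
  lra.
Qed.

Lemma Rabs_le_of_affine_diff N w1 w2 w3 a b a' b' :
  Rabs (affine_form N w1 w2 w3 a b) <= 2 -> Rabs (affine_form N w1 w2 w3 a' b') <= 2 ->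
  Rabs (affine_form N w1 w2 w3 a' b' - affine_form N w1 w2 w3 a b) <= 4.
Proof. intros H H'; eapply Rle_trans; [apply Rabs_triang|]; rewrite Rabs_Ropp; lra. Qed.

(* The constants of [slab_a]: [w3] times the cross product of [R - P] and [Q - P] equals
   [(aR - aP)(l Q - l P) - (l R - l P)(aQ - aP)] for the affine form [l], so it is at most
   [8 (aQ - aP)], while [|w3| >= 1/4]. *)
Lemma cross_le_of_small_affine_form N w1 w2 w3 aP bP aQ bQ aR bR :
  1 / 4 <= Rabs w3 -> INR aP <= INR aR <= INR aQ ->
  Rabs (affine_form N w1 w2 w3 aQ bQ - affine_form N w1 w2 w3 aP bP) <= 4 ->
  Rabs (affine_form N w1 w2 w3 aR bR - affine_form N w1 w2 w3 aP bP) <= 4 ->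
  Rabs ((INR aR - INR aP) * (INR bQ - INR bP) - (INR bR - INR bP) * (INR aQ - INR aP))
  <= 32 * (INR aQ - INR aP).
Proof.
  intros Hw [H1 H2] HPQ HPR.
  set (cross := (INR aR - INR aP) * (INR bQ - INR bP) - (INR bR - INR bP) * (INR aQ - INR aP)).
  assert (Hid : w3 * cross
     = (INR aR - INR aP) * (affine_form N w1 w2 w3 aQ bQ - affine_form N w1 w2 w3 aP bP)
       - (affine_form N w1 w2 w3 aR bR - affine_form N w1 w2 w3 aP bP) * (INR aQ - INR aP))
    by (unfold cross, affine_form; ring).
  assert (Hw3 : Rabs (w3 * cross) <= 8 * (INR aQ - INR aP)).
  { rewrite Hid; eapply Rle_trans; [apply Rabs_triang|].
    rewrite Rabs_Ropp, !Rabs_mult, (Rabs_right (INR aR - INR aP)), (Rabs_right (INR aQ - INR aP))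
      by lra.
    nra. }
  rewrite Rabs_mult in Hw3; pose proof (Rabs_pos cross); nra.
Qed.

Lemma slab_a_of_small_affine_form N w1 w2 w3 P Q R :
  (9 <= N)%nat -> w1 * w1 + w2 * w2 + w3 * w3 = 1 -> Rabs w2 <= Rabs w3 ->
  (fst R <= 2 * N)%nat -> (snd R <= 2 * N)%nat ->
  Rabs (affine_form N w1 w2 w3 (fst P) (snd P)) <= 2 ->
  Rabs (affine_form N w1 w2 w3 (fst Q) (snd Q)) <= 2 ->
  Rabs (affine_form N w1 w2 w3 (fst R) (snd R)) <= 2 ->
  (fst P <= fst R <= fst Q)%nat -> slab_a P Q R = true.
Proof.
  destruct P as [aP bP], Q as [aQ bQ], R as [aR bR]; simpl.
  intros HN Hs H23 Ha Hb HP HQ HR [H1 H2].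
  pose proof (steep_of_small_affine_form N w1 w2 w3 aR bR HN Hs H23 Ha Hb HR) as Hw.
  pose proof (Rabs_le_of_affine_diff _ _ _ _ _ _ _ _ HP HQ) as HPQ.
  pose proof (Rabs_le_of_affine_diff _ _ _ _ _ _ _ _ HP HR) as HPR.
  unfold slab_a; rewrite (proj2 (Nat.leb_le _ _) H1), (proj2 (Nat.leb_le _ _) H2), !andb_true_l.
  apply le_INR in H1, H2.
  apply andb_true_intro; split.
  - assert (HZ : (Z.abs ((Z.of_nat aR - Z.of_nat aP) * (Z.of_nat bQ - Z.of_nat bP)
                         - (Z.of_nat bR - Z.of_nat bP) * (Z.of_nat aQ - Z.of_nat aP))
                  <= 32 * (Z.of_nat aQ - Z.of_nat aP))%Z).
    { apply le_IZR; rewrite abs_IZR.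
      repeat (rewrite mult_IZR || rewrite minus_IZR); rewrite <- !INR_IZR_INZ.
      now apply (cross_le_of_small_affine_form N w1 w2 w3). }
    now apply Z.leb_le.
  - destruct (aQ =? aP)%nat eqn:E; [|reflexivity].
    apply Nat.eqb_eq in E; subst aQ.
    assert (aR = aP) by (apply INR_eq; lra); subst aR.
    assert (Hb3 : Rabs (w3 * (INR bR - INR bP)) <= 4)
      by (replace (w3 * (INR bR - INR bP))
            with (affine_form N w1 w2 w3 aP bR - affine_form N w1 w2 w3 aP bP)
            by (unfold affine_form; ring); exact HPR).
    rewrite Rabs_mult in Hb3; pose proof (Rabs_pos (INR bR - INR bP)).
    apply Z.leb_le, le_IZR; rewrite abs_IZR, minus_IZR, <- !INR_IZR_INZ; nra.
Qed.

Definition sphere_norm (N : nat) (P : nat * nat) : R :=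
  sqrt (INR N * INR N + (INR (fst P) - INR N) * (INR (fst P) - INR N)
        + (INR (snd P) - INR N) * (INR (snd P) - INR N)).

Definition sphere_point (N : nat) (P : nat * nat) : R3 :=
  (INR N / sphere_norm N P, (INR (fst P) - INR N) / sphere_norm N P,
   (INR (snd P) - INR N) / sphere_norm N P).

Lemma sphere_norm_sqr N P :
  sphere_norm N P * sphere_norm N P
  = INR N * INR N + (INR (fst P) - INR N) * (INR (fst P) - INR N)
    + (INR (snd P) - INR N) * (INR (snd P) - INR N).
Proof.
  apply sqrt_sqrt.
  pose proof (Rle_0_sqr (INR N)); pose proof (Rle_0_sqr (INR (fst P) - INR N));
    pose proof (Rle_0_sqr (INR (snd P) - INR N)); unfold Rsqr in *; lra.
Qed.

Lemma sphere_norm_pos N P : (1 <= N)%nat -> 0 < sphere_norm N P.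
Proof.
  intros H; apply le_INR in H; simpl in H; apply sqrt_lt_R0.
  pose proof (Rle_0_sqr (INR (fst P) - INR N)); pose proof (Rle_0_sqr (INR (snd P) - INR N));
    unfold Rsqr in *; nra.
Qed.

Lemma sphere_norm_le N P :
  (fst P <= 2 * N)%nat -> (snd P <= 2 * N)%nat -> sphere_norm N P <= 2 * INR N.
Proof.
  intros Ha Hb; apply le_INR in Ha, Hb; rewrite mult_INR in Ha, Hb; simpl in Ha, Hb.
  pose proof (pos_INR (fst P)); pose proof (pos_INR (snd P)); pose proof (pos_INR N).
  unfold sphere_norm; rewrite <- (sqrt_square (2 * INR N)) by lra; apply sqrt_le_1_alt; nra.
Qed.

Lemma on_sphere_sphere_point N P : (1 <= N)%nat -> on_sphere (sphere_point N P).
Proof.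
  intros H; pose proof (sphere_norm_pos N P H); pose proof (sphere_norm_sqr N P).
  unfold on_sphere, sphere_point, dot3; rewrite <- sqrt_1; f_equal.
  replace 1 with (sphere_norm N P * sphere_norm N P / (sphere_norm N P * sphere_norm N P))
    by (field; lra).
  rewrite H1 at 1; field; lra.
Qed.

Lemma sphere_point_inj N P Q : (1 <= N)%nat -> sphere_point N P = sphere_point N Q -> P = Q.
Proof.
  intros H E; pose proof (sphere_norm_pos N P H); pose proof (sphere_norm_pos N Q H).
  assert (HN : 0 < INR N) by (apply le_INR in H; simpl in H; lra).
  unfold sphere_point in E; injection E as E1 E2 E3.
  assert (Hr : sphere_norm N P = sphere_norm N Q).
  { apply (f_equal Rinv) in E1; rewrite !Rinv_div in E1.
    apply (Rmult_eq_reg_r (/ INR N)); [exact E1|apply Rinv_neq_0_compat; lra]. }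
  rewrite Hr in E2, E3.
  assert (Ha : INR (fst P) = INR (fst Q))
    by (apply (Rmult_eq_compat_r (sphere_norm N Q)) in E2; field_simplify in E2; lra).
  assert (Hb : INR (snd P) = INR (snd Q))
    by (apply (Rmult_eq_compat_r (sphere_norm N Q)) in E3; field_simplify in E3; lra).
  apply INR_eq in Ha, Hb; destruct P, Q; simpl in *; congruence.
Qed.

Lemma dot3_sphere_point N w1 w2 w3 P : (1 <= N)%nat ->
  dot3 (w1, w2, w3) (sphere_point N P) = affine_form N w1 w2 w3 (fst P) (snd P) / sphere_norm N P.
Proof.
  intros H; pose proof (sphere_norm_pos N P H).
  unfold dot3, sphere_point, affine_form; field; lra.
Qed.

Lemma small_affine_form_of_strip N w1 w2 w3 P :
  (1 <= N)%nat -> (fst P <= 2 * N)%nat -> (snd P <= 2 * N)%nat ->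
  Rabs (dot3 (w1, w2, w3) (sphere_point N P)) <= / INR N ->
  Rabs (affine_form N w1 w2 w3 (fst P) (snd P)) <= 2.
Proof.
  intros H Ha Hb Hs; pose proof (sphere_norm_pos N P H); pose proof (sphere_norm_le N P Ha Hb).
  assert (HN : 0 < INR N) by (apply le_INR in H; simpl in H; lra).
  rewrite dot3_sphere_point in Hs by exact H; unfold Rdiv in Hs.
  rewrite Rabs_mult, (Rabs_right (/ sphere_norm N P)) in Hs
    by (apply Rle_ge, Rlt_le, Rinv_0_lt_compat; lra).
  apply Rmult_le_compat_r with (r := sphere_norm N P) in Hs; [|lra].
  rewrite Rmult_assoc, Rinv_l, Rmult_1_r in Hs by lra.
  apply Rle_trans with (/ INR N * (2 * INR N)); [|right; field; lra].
  eapply Rle_trans; [exact Hs|]; apply Rmult_le_compat_l; [apply Rlt_le, Rinv_0_lt_compat|]; lra.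
Qed.

Lemma exists_extremes {A} (h : A -> nat) l : l <> [] ->
  exists p q, In p l /\ In q l /\ forall i, In i l -> (h p <= h i <= h q)%nat.
Proof.
  induction l as [|x l IH]; intros Hl; [congruence|].
  destruct l as [|y l].
  - exists x, x; do 2 (split; [now left|]); intros z [<-|[]]; lia.
  - destruct IH as [p [q [Hp [Hq H]]]]; [congruence|].
    exists (if Nat.leb (h x) (h p) then x else p), (if Nat.leb (h q) (h x) then x else q).
    destruct (Nat.leb_spec (h x) (h p)), (Nat.leb_spec (h q) (h x));
      (split; [now (left + right)|split; [now (left + right)|]]);
      intros z [<-|Hz]; try specialize (H z Hz); lia.
Qed.

Lemma on_sphere_sum_sqr v1 v2 v3 : on_sphere (v1, v2, v3) -> v1 * v1 + v2 * v2 + v3 * v3 = 1.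
Proof.
  unfold on_sphere, dot3; intros H.
  pose proof (Rle_0_sqr v1); pose proof (Rle_0_sqr v2); pose proof (Rle_0_sqr v3); unfold Rsqr in *.
  rewrite <- (sqrt_sqrt (v1 * v1 + v2 * v2 + v3 * v3)), H by lra; ring.
Qed.

Definition in_strip_region (N : nat) (w1 w2 w3 : R) (R : nat * nat) : Prop :=
  (fst R <= 2 * N)%nat /\ (snd R <= 2 * N)%nat /\
  Rabs (affine_form N w1 w2 w3 (fst R) (snd R)) <= 2.

Lemma slab_a_of_strip_region N w1 w2 w3 L :
  (9 <= N)%nat -> w1 * w1 + w2 * w2 + w3 * w3 = 1 -> Rabs w2 <= Rabs w3 -> L <> [] ->
  (forall R, In R L -> in_strip_region N w1 w2 w3 R) ->
  exists P Q, In P L /\ In Q L /\ forall R, In R L -> slab_a P Q R = true.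
Proof.
  intros HN Hs H23 HL H.
  destruct (exists_extremes fst L HL) as [P [Q [HP [HQ Hext]]]].
  exists P, Q; repeat split; auto; intros R HR.
  destruct (H P HP) as [_ [_ HlP]], (H Q HQ) as [_ [_ HlQ]], (H R HR) as [Ha [Hb HlR]].
  now apply (slab_a_of_small_affine_form N w1 w2 w3), Hext.
Qed.

Lemma slab_of_strip_region N w1 w2 w3 L :
  (9 <= N)%nat -> w1 * w1 + w2 * w2 + w3 * w3 = 1 -> L <> [] ->
  (forall R, In R L -> in_strip_region N w1 w2 w3 R) ->
  exists P Q, In P L /\ In Q L /\ forall R, In R L -> slab P Q R = true.
Proof.
  intros HN Hs HL H; unfold slab.
  destruct (Rle_lt_dec (Rabs w2) (Rabs w3)) as [H23|H32].
  - destruct (slab_a_of_strip_region N w1 w2 w3 L) as [P [Q [HP [HQ HPQ]]]]; auto.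
    exists P, Q; repeat split; auto; intros R HR; now rewrite HPQ.
  - assert (Ht : forall R, In R (map transpose L) -> in_strip_region N w1 w3 w2 R).
    { intros R HR; apply in_map_iff in HR as [[a b] [<- HR]].
      destruct (H _ HR) as [Ha [Hb Hl]]; unfold in_strip_region; simpl in *.
      now rewrite <- affine_form_transpose. }
    destruct (slab_a_of_strip_region N w1 w3 w2 (map transpose L) HN ltac:(lra) ltac:(lra)
                ltac:(now destruct L) Ht) as [P [Q [HP [HQ HPQ]]]].
    apply in_map_iff in HP as [P' [<- HP]], HQ as [Q' [<- HQ]].
    exists P', Q'; repeat split; auto; intros R HR.
    unfold slab_b; rewrite HPQ by now apply in_map. apply orb_true_r.
Qed.

Lemma count_nth_seq {A} (q : A -> bool) (d : A) f :
  count q f = count (fun i => q (nth i f d)) (seq 0 (length f)).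
Proof.
  rewrite <- (count_map q (fun i => nth i f d)); f_equal.
  induction f as [|x f IH]; simpl; [reflexivity|].
  now rewrite <- seq_shift, map_map, <- IH.
Qed.

Lemma strip_count_lt N K f v :
  (9 <= N)%nat -> length f = N -> incl f (grid (2 * N + 1)) ->
  (forall P Q, In P (grid (2 * N + 1)) -> In Q (grid (2 * N + 1)) ->
     (count (slab P Q) f < K)%nat) ->
  on_sphere v -> (strip_count N (fun i => sphere_point N (nth i f (0, 0)%nat)) v < K)%nat.
Proof.
  intros HN Hl Hf HK Hv; destruct v as [[v1 v2] v3]; apply on_sphere_sum_sqr in Hv.
  set (in_strip := fun i =>
         if Rle_dec (Rabs (dot3 (v1, v2, v3) (sphere_point N (nth i f (0, 0)%nat))))
                    (/ INR N) then true else false).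
  change (strip_count _ _ _) with (count in_strip (seq 0 N)).
  assert (Hgrid : forall i, (i < N)%nat -> In (nth i f (0, 0)%nat) (grid (2 * N + 1)))
    by (intros i Hi; apply Hf, nth_In; lia).
  destruct (filter in_strip (seq 0 N)) as [|i0 S] eqn:ES.
  - assert (H00 : In (0, 0)%nat (grid (2 * N + 1))) by (apply in_grid; simpl; lia).
    specialize (HK _ _ H00 H00); unfold count; rewrite ES; simpl; lia.
  - set (L := map (fun i => nth i f (0, 0)%nat) (i0 :: S)).
    assert (HS : forall i, In i (i0 :: S) -> (i < N)%nat /\ in_strip i = true)
      by (intros i Hi; rewrite <- ES, filter_In, in_seq in Hi; split; [lia|tauto]).
    assert (HL : forall R, In R L -> In R (grid (2 * N + 1)) /\ in_strip_region N v1 v2 v3 R).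
    { intros R HR; apply in_map_iff in HR as [i [<- Hi]]; destruct (HS i Hi) as [HiN Hs].
      pose proof (Hgrid i HiN) as HR; split; [exact HR|].
      apply in_grid in HR; unfold in_strip_region; do 2 (split; [lia|]).
      unfold in_strip in Hs; destruct Rle_dec as [Hr|]; [|discriminate].
      apply small_affine_form_of_strip; auto; lia. }
    destruct (slab_of_strip_region N v1 v2 v3 L) as [P [Q [HP [HQ HPQ]]]];
      auto; [discriminate|firstorder|].
    specialize (HK P Q (proj1 (HL P HP)) (proj1 (HL Q HQ))).
    enough (count in_strip (seq 0 N) <= count (slab P Q) f)%nat by lia.
    rewrite (count_nth_seq _ (0, 0)%nat f), Hl.
    apply count_le_incl; intros i Hi Hs; apply HPQ, (in_map (fun j => nth j f (0, 0)%nat)).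
    rewrite <- ES; apply filter_In; auto.
Qed.

Lemma ln_le x y : 0 < x -> x <= y -> ln x <= ln y.
Proof. intros Hx [H|<-]; [left; now apply ln_increasing|right; reflexivity]. Qed.

Lemma exp_le x y : x <= y -> exp x <= exp y.
Proof. intros [H|<-]; [left; now apply exp_increasing|right; reflexivity]. Qed.

Lemma ln_le_sub_1 x : 0 < x -> ln x <= x - 1.
Proof.
  intros Hx; rewrite <- (ln_exp (x - 1)); apply ln_le; [exact Hx|].
  pose proof (exp_ineq1_le (x - 1)); lra.
Qed.

Lemma ln_le_half u : 0 < u -> ln u <= u / 2.
Proof.
  intros Hu; pose proof (sqrt_lt_R0 u Hu) as Hs; pose proof (sqrt_sqrt u (Rlt_le _ _ Hu)) as Hss.
  assert (ln u = 2 * ln (sqrt u)) by (rewrite <- Hss at 1; rewrite ln_mult by exact Hs; ring).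
  pose proof (ln_le_sub_1 _ Hs); pose proof (Rle_0_sqr (sqrt u - 2)); unfold Rsqr in *; nra.
Qed.

(* From [(1 + 1/k)^k <= e <= 3]. *)
Lemma fact_ge_pow_div_3 k : (INR k / 3) ^ k <= INR (fact k).
Proof.
  induction k as [|k IH]; [simpl; lra|].
  change (fact (S k)) with (S k * fact k)%nat; rewrite mult_INR, S_INR.
  pose proof (pos_INR k) as Hk.
  assert (Hb : (INR k + 1) ^ k <= 3 * INR k ^ k).
  { destruct k as [|k]; [simpl; lra|].
    set (x := INR (S k)) in *.
    assert (Hx : 0 < x) by (unfold x; rewrite S_INR; pose proof (pos_INR k); lra).
    assert (E : (x + 1) ^ S k = x ^ S k * (1 + / x) ^ S k)
      by (rewrite <- Rpow_mult_distr; f_equal; field; lra).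
    assert (H1 : (1 + / x) ^ S k <= exp 1).
    { assert (Hpos : 0 < 1 + / x) by (pose proof (Rinv_0_lt_compat x Hx); lra).
      rewrite <- (exp_ln ((1 + / x) ^ S k)) by (apply pow_lt; exact Hpos).
      apply exp_le; rewrite ln_pow by exact Hpos; fold x.
      pose proof (ln_le_sub_1 (1 + / x) Hpos).
      assert (Hxl : x * ln (1 + / x) <= x * / x) by (apply Rmult_le_compat_l; lra).
      rewrite Rinv_r in Hxl by lra; exact Hxl. }
    rewrite E; pose proof exp_le_3; pose proof (pow_lt x (S k) Hx); nra. }
  assert (E1 : ((INR k + 1) / 3) ^ S k = (INR k + 1) / 3 * ((INR k + 1) ^ k * (/ 3) ^ k))
    by (simpl; rewrite <- Rpow_mult_distr; reflexivity).
  assert (E2 : (INR k / 3) ^ k = INR k ^ k * (/ 3) ^ k)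
    by (rewrite <- Rpow_mult_distr; reflexivity).
  rewrite E1; rewrite E2 in IH.
  assert (0 < (/ 3) ^ k) by (apply pow_lt; lra).
  assert ((INR k + 1) ^ k * (/ 3) ^ k <= 3 * (INR k ^ k * (/ 3) ^ k)) by nra.
  nra.
Qed.

(* [195 = 3 * 65]: [K! >= (K/3)^K] has to absorb [65^K] and [2 (2N + 1)^4]. *)
Definition slab_threshold (N : nat) : nat :=
  Z.to_nat (up (195 * (ln (INR N) / ln (ln (INR N))))).

Lemma ln_ln_pos N : (16 <= N)%nat -> 1 < ln (INR N) /\ 0 < ln (ln (INR N)).
Proof.
  intros HN; apply le_INR in HN; replace (INR 16) with 16 in HN by (simpl; lra).
  assert (H1 : 1 < ln (INR N)).
  { rewrite <- (ln_exp 1); apply ln_increasing; [apply exp_pos|pose proof exp_le_3; lra]. }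
  split; [exact H1|rewrite <- ln_1; apply ln_increasing; lra].
Qed.

Lemma slab_threshold_bounds N : (16 <= N)%nat ->
  195 * (ln (INR N) / ln (ln (INR N))) <= INR (slab_threshold N)
  <= 195 * (ln (INR N) / ln (ln (INR N))) + 1.
Proof.
  intros HN; destruct (ln_ln_pos N HN) as [H1 H2].
  set (r := 195 * (ln (INR N) / ln (ln (INR N)))).
  assert (Hr : 0 < r) by (unfold r; apply Rmult_lt_0_compat; [lra|apply Rdiv_lt_0_compat; lra]).
  destruct (archimed r) as [Hu1 Hu2].
  assert (Hup : (0 < up r)%Z) by (apply lt_IZR; simpl; lra).
  unfold slab_threshold; fold r; rewrite INR_IZR_INZ, Z2Nat.id by lia; lra.
Qed.

(* [K ln (K/195) >= 195 (ln N / ln ln N) (ln ln N / 2)] because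
   [ln (ln N / ln ln N) >= ln ln N / 2]. *)
Lemma pow_slab_threshold_ge N : (16 <= N)%nat ->
  2 * (2 * INR N + 1) ^ 4 <= (INR (slab_threshold N) / 195) ^ slab_threshold N.
Proof.
  intros HN; destruct (ln_ln_pos N HN) as [Hl1 Hl2].
  destruct (slab_threshold_bounds N HN) as [HK _].
  set (K := slab_threshold N) in *; set (k := INR K) in *.
  set (n := INR N) in *; set (l1 := ln n) in *; set (l2 := ln l1) in *.
  assert (Hn : 16 <= n) by (apply le_INR in HN; unfold n; simpl in HN; lra).
  set (L := l1 / l2) in *.
  assert (HL : 0 < L) by (apply Rdiv_lt_0_compat; lra).
  assert (Hk : 0 < k / 195) by lra.
  assert (HlL : l2 / 2 <= ln L).
  { unfold L, Rdiv; rewrite ln_mult, ln_Rinv by (try apply Rinv_0_lt_compat; lra).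
    pose proof (ln_le_half l2 Hl2); fold l2; lra. }
  assert (Hlk : l2 / 2 <= ln (k / 195))
    by (apply Rle_trans with (ln L); [exact HlL|apply ln_le; [exact HL|lra]]).
  assert (HA : 195 / 2 * l1 <= k * ln (k / 195)).
  { apply Rle_trans with (195 * L * (l2 / 2)); [right; unfold L; field; lra|].
    apply Rmult_le_compat; lra. }
  assert (Hln2 : ln 2 <= 1) by (pose proof (ln_le_sub_1 2 ltac:(lra)); lra).
  assert (Hln3 : ln 3 <= 2) by (pose proof (ln_le_sub_1 3 ltac:(lra)); lra).
  assert (Hlhs : ln (2 * (2 * n + 1) ^ 4) <= k * ln (k / 195)).
  { rewrite ln_mult, ln_pow by (try apply pow_lt; lra).
    assert (ln (2 * n + 1) <= ln 3 + l1)
      by (unfold l1; rewrite <- ln_mult by lra; apply ln_le; lra).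
    simpl INR; lra. }
  rewrite <- (exp_ln (2 * (2 * n + 1) ^ 4)) by (apply Rmult_lt_0_compat; [lra|apply pow_lt; lra]).
  rewrite <- (exp_ln ((k / 195) ^ K)) by (apply pow_lt; exact Hk).
  apply exp_le; rewrite ln_pow by exact Hk; exact Hlhs.
Qed.

Lemma fact_slab_threshold_ge N : (16 <= N)%nat ->
  (2 * (2 * N + 1) ^ 4 * 65 ^ slab_threshold N <= fact (slab_threshold N))%nat.
Proof.
  intros HN; pose proof (pow_slab_threshold_ge N HN) as Hpow.
  set (K := slab_threshold N) in *.
  apply INR_le; rewrite !mult_INR, !pow_INR, plus_INR, mult_INR.
  replace (INR 2) with 2 by reflexivity; replace (INR 1) with 1 by reflexivity.
  replace (INR 65) with 65 by (simpl; lra).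
  eapply Rle_trans; [|apply fact_ge_pow_div_3].
  replace (INR K / 3) with (INR K / 195 * 65) by field.
  rewrite (Rpow_mult_distr (INR K / 195) 65 K).
  apply Rmult_le_compat_r; [apply pow_le; lra|exact Hpow].
Qed.

Theorem mainTheorem12 :
  exists c : R, exists N0 : nat,
    forall N : nat, (N0 <= N)%nat ->
      exists x : nat -> R3,
        (forall i, (i < N)%nat -> on_sphere (x i)) /\
        (forall i j, (i < N)%nat -> (j < N)%nat -> x i = x j -> i = j) /\
        (forall v : R3, on_sphere v ->
           INR (strip_count N x v) <= c * (ln (INR N) / ln (ln (INR N)))).
Proof.
  exists 195, 16%nat; intros N HN.
  destruct (exists_good_tuple N (slab_threshold N) (fact_slab_threshold_ge N HN))
    as [f [Hf [Hslab Hrepeat]]].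
  apply in_tuples in Hf as [Hl Hgrid].
  exists (fun i => sphere_point N (nth i f (0, 0)%nat)); repeat split.
  - intros i _; apply on_sphere_sphere_point; lia.
  - intros i j Hi Hj E; apply sphere_point_inj in E; [|lia].
    apply (NoDup_nth f (0, 0)%nat); [|lia|lia|exact E].
    exact (NoDup_of_count_same_point f _ Hgrid Hrepeat).
  - intros v Hv.
    pose proof (strip_count_lt N (slab_threshold N) f v ltac:(lia) Hl Hgrid Hslab Hv) as Hs.
    apply le_INR in Hs; destruct (slab_threshold_bounds N HN) as [_ HK].
    rewrite S_INR in Hs; lra.
Qed.
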